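(* Let $(X,d,W)$ be a $W$-hyperbolic space. The following are equivalent: (1) there exists $\eta:(0,\infty)\times(0,2]\to(0,1]$ such that for all $r>0$, $\varepsilon\in(0,2]$ and $a,x,y\in X$: if $d(x,a)\le r$, $d(y,a)\le r$ and $d(x,y)\ge\varepsilon r$, then $d\big(\tfrac12x\oplus\tfrac12y,a\big)\le(1-\eta(r,\varepsilon))r$; (2) there exists $\eta:\mathbb Q^+_*\times\mathbb N\to\mathbb N$ such that for all $r\in\mathbb Q^+_*$, $k\in\mathbb N$ and $a,x,y\in X$: if $d(x,a)<r$, $d(y,a)<r$ and $d\big(\tfrac12x\oplus\tfrac12y,a\big)>\big(1-2^{-\eta(r,k)}\big)r$, then $d(x,y)\le 2^{-k}r$.
   Context: A $W$-hyperbolic space is $(X,d,W)$ with $(X,d)$ a metric space and $W:X\times X\times[0,1]\to X$ such that for all $x,y,z,w\in X$, $\lambda,\lambda_1,\lambda_2\in[0,1]$: (W1) $d(z,W(x,y,\lambda))\le(1-\lambda)d(z,x)+\lambda d(z,y)$; (W2) $d(W(x,y,\lambda_1),W(x,y,\lambda_2))=|\lambda_1-\lambda_2|d(x,y)$; (W3) $W(x,y,\lambda)=W(y,x,1-\lambda)$; (W4) $d(W(x,z,\lambda),W(y,w,\lambda))\le(1-\lambda)d(x,y)+\lambda d(z,w)$. Notation: $(1-\lambda)x\oplus\lambda y:=W(x,y,\lambda)$. $\mathbb Q^+_*$ denotes the set of positive rational numbers. *)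

From Stdlib Require Export Reals QArith.
Open Scope R_scope.

Definition is_metric {X : Type} (d : X -> X -> R) : Prop :=
  (forall x y, d x y = 0 <-> x = y) /\
  (forall x y, d x y = d y x) /\
  (forall x y z, d x z <= d x y + d y z).

(* (X,d,W) is a W-hyperbolic space, W(x,y,lambda) = (1-lambda)x (+) lambda y;
   values of W outside lambda in [0,1] are irrelevant. *)
Definition is_W_hyperbolic {X : Type} (d : X -> X -> R) (W : X -> X -> R -> X)
  : Prop :=
  is_metric d /\
  (forall x y z l, 0 <= l <= 1 ->
      d z (W x y l) <= (1 - l) * d z x + l * d z y) /\
  (forall x y l1 l2, 0 <= l1 <= 1 -> 0 <= l2 <= 1 ->
      d (W x y l1) (W x y l2) = Rabs (l1 - l2) * d x y) /\
  (forall x y l, 0 <= l <= 1 -> W x y l = W y x (1 - l)) /\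
  (forall x y z w l, 0 <= l <= 1 ->
      d (W x z l) (W y w l) <= (1 - l) * d x y + l * d z w).

Definition midW {X : Type} (W : X -> X -> R -> X) (x y : X) : X := W x y (1/2).

From Stdlib Require Import Reals QArith Qreals Lra ClassicalEpsilon.
Open Scope R_scope.

(** (1) gives (2) by contraposition: for given [r] and [k], any [N] with
    [2^-N <= eta(r, 2^-k)] will do.  For the converse let [x], [y] lie in the
    closed ball [B(a, r)] with [d(x, y) >= eps r] and choose a rational [q < r]
    close to [r].  Moving [x] and [y] towards [a] by the factor [l = (q - s)/r]
    puts them in the open ball of radius [q], moves their midpoint by at most
    [(1 - l) r] and changes their distance by at most [2 (1 - l) r]; so if the
    midpoint of [x] and [y] were within [s] of the sphere, (2) at radius [q]
    would force [d(x, y) < eps r]. *)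

Definition uniform_convexity_modulus {X : Type} (d : X -> X -> R)
  (W : X -> X -> R -> X) (eta : R -> R -> R) : Prop :=
  (forall r eps, 0 < r -> 0 < eps <= 2 -> 0 < eta r eps <= 1) /\
  (forall r eps (a x y : X), 0 < r -> 0 < eps <= 2 ->
     d x a <= r -> d y a <= r -> d x y >= eps * r ->
     d (midW W x y) a <= (1 - eta r eps) * r).

Definition rational_convexity_modulus {X : Type} (d : X -> X -> R)
  (W : X -> X -> R -> X) (eta : Q -> nat -> nat) : Prop :=
  forall (r : Q) (k : nat) (a x y : X), (0 < r)%Q ->
    d x a < Q2R r -> d y a < Q2R r ->
    d (midW W x y) a > (1 - (1/2) ^ (eta r k)) * Q2R r ->
    d x y <= (1/2) ^ k * Q2R r.

Lemma half_pow_pos_le1 (k : nat) : 0 < (1/2)^k <= 1.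
Proof. induction k as [|k IH]; simpl; lra. Qed.

Lemma half_pow_lt (y : R) : 0 < y -> exists k : nat, (1/2)^k < y.
Proof.
  intros Hy.
  destruct (pow_lt_1_zero (1/2) ltac:(rewrite Rabs_pos_eq; lra) y Hy) as [k Hk].
  exists k. specialize (Hk k (le_n k)).
  rewrite Rabs_pos_eq in Hk; [exact Hk|].
  apply pow_le; lra.
Qed.

Lemma Q2R_pos_iff (r : Q) : (0 < r)%Q <-> 0 < Q2R r.
Proof.
  assert (H0 : Q2R 0 = 0) by (unfold Q2R; simpl; lra).
  split; intros H.
  - rewrite <- H0. now apply Qlt_Rlt.
  - apply Rlt_Qlt. now rewrite H0.
Qed.

(* The witness is [up(a m) / m] with [m = up(1/(b - a))], so that [b m - a m > 1]. *)
Lemma exists_Q2R_between (a b : R) : a < b -> exists q : Q, a < Q2R q < b.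
Proof.
  intros Hab.
  destruct (archimed (/ (b - a))) as [Hm _].
  assert (Hinv : 0 < / (b - a)) by (apply Rinv_0_lt_compat; lra).
  assert (Hm0 : (0 < up (/ (b - a)))%Z) by (apply lt_IZR; lra).
  destruct (archimed (a * IZR (up (/ (b - a))))) as [Hz1 Hz2].
  exists (Qmake (up (a * IZR (up (/ (b - a))))) (Z.to_pos (up (/ (b - a))))).
  unfold Q2R; simpl. rewrite Z2Pos.id by exact Hm0.
  set (m := IZR (up (/ (b - a)))) in *.
  set (z := IZR (up (a * m))) in *.
  assert (Hbm : 1 < (b - a) * m).
  { replace 1 with ((b - a) * / (b - a)) by (field; lra).
    apply Rmult_lt_compat_l; lra. }
  split; apply Rmult_lt_reg_r with m; try lra;
    rewrite Rmult_assoc, Rinv_l by lra; lra.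
Qed.

Lemma rational_modulus_of_modulus {X : Type} (d : X -> X -> R)
  (W : X -> X -> R -> X) (eta : R -> R -> R) :
  uniform_convexity_modulus d W eta ->
  exists eta' : Q -> nat -> nat, rational_convexity_modulus d W eta'.
Proof.
  intros [Heta_range Heta].
  assert (HN : forall (r : Q) (k : nat), exists N : nat,
             (0 < r)%Q -> (1/2)^N <= eta (Q2R r) ((1/2)^k)).
  { intros r k.
    destruct (Qlt_le_dec 0 r) as [Hr|Hr]; [|exists 0%nat; intros H; now apply Qle_not_lt in Hr].
    apply Q2R_pos_iff in Hr.
    pose proof (half_pow_pos_le1 k).
    destruct (Heta_range (Q2R r) ((1/2)^k) Hr ltac:(lra)) as [Hpos _].
    destruct (half_pow_lt _ Hpos) as [N HNlt].
    exists N. intros _. lra. }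
  destruct (choice _ (fun r => choice _ (HN r))) as [eta' Heta'].
  exists eta'. intros r k a x y Hr Hx Hy Hmid.
  specialize (Heta' r k Hr).
  apply Q2R_pos_iff in Hr.
  pose proof (half_pow_pos_le1 k).
  apply Rnot_lt_le. intros Hxy.
  pose proof (Heta (Q2R r) ((1/2)^k) a x y Hr ltac:(lra) ltac:(lra) ltac:(lra) ltac:(lra)).
  assert ((1 - eta (Q2R r) ((1/2)^k)) * Q2R r <= (1 - (1/2)^(eta' r k)) * Q2R r)
    by (apply Rmult_le_compat_r; lra).
  lra.
Qed.

Section W_hyperbolic.

Variables (X : Type) (d : X -> X -> R) (W : X -> X -> R -> X).
Hypothesis HW : is_W_hyperbolic d W.

Lemma dist_refl (x : X) : d x x = 0.
Proof. destruct HW as [[Hd0 _] _]. now apply Hd0. Qed.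

Lemma dist_sym (x y : X) : d x y = d y x.
Proof. destruct HW as [[_ [Hsym _]] _]. apply Hsym. Qed.

Lemma dist_triangle (x y z : X) : d x z <= d x y + d y z.
Proof. destruct HW as [[_ [_ Htri]] _]. apply Htri. Qed.

Lemma dist_W_center (a x : X) (l : R) : 0 <= l <= 1 -> d (W a x l) a <= l * d x a.
Proof.
  intros Hl. destruct HW as [_ [W1 _]].
  pose proof (W1 a x a l Hl) as H.
  rewrite dist_refl, (dist_sym a x), (dist_sym a) in H. lra.
Qed.

Lemma dist_W_endpoint (a x : X) (l : R) : 0 <= l <= 1 -> d x (W a x l) <= (1 - l) * d x a.
Proof.
  intros Hl. destruct HW as [_ [W1 _]].
  pose proof (W1 a x x l Hl) as H. rewrite dist_refl in H. lra.
Qed.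

Lemma dist_midW_le (x y x' y' : X) :
  d (midW W x y) (midW W x' y') <= (d x x' + d y y') / 2.
Proof.
  destruct HW as [_ [_ [_ [_ W4]]]].
  pose proof (W4 x x' y y' (1/2) ltac:(lra)). unfold midW. lra.
Qed.

Section Shrink.

Variables (a x y : X) (l r : R).
Hypotheses (Hl : 0 <= l <= 1) (Hx : d x a <= r) (Hy : d y a <= r).

Lemma dist_W_center_le : d (W a x l) a <= l * r.
Proof.
  pose proof (dist_W_center a x l Hl).
  assert (l * d x a <= l * r) by (apply Rmult_le_compat_l; lra). lra.
Qed.

Lemma dist_midW_shrink :
  d (midW W x y) a <= d (midW W (W a x l) (W a y l)) a + (1 - l) * r.
Proof.
  pose proof (dist_W_endpoint a x l Hl). pose proof (dist_W_endpoint a y l Hl).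
  pose proof (dist_midW_le x y (W a x l) (W a y l)).
  pose proof (dist_triangle (midW W x y) (midW W (W a x l) (W a y l)) a).
  assert ((1 - l) * d x a <= (1 - l) * r) by (apply Rmult_le_compat_l; lra).
  assert ((1 - l) * d y a <= (1 - l) * r) by (apply Rmult_le_compat_l; lra).
  lra.
Qed.

Lemma dist_shrink : d x y <= d (W a x l) (W a y l) + 2 * (1 - l) * r.
Proof.
  pose proof (dist_W_endpoint a x l Hl). pose proof (dist_W_endpoint a y l Hl).
  pose proof (dist_triangle x (W a x l) y).
  pose proof (dist_triangle (W a x l) (W a y l) y).
  rewrite (dist_sym (W a y l) y) in *.
  assert ((1 - l) * d x a <= (1 - l) * r) by (apply Rmult_le_compat_l; lra).
  assert ((1 - l) * d y a <= (1 - l) * r) by (apply Rmult_le_compat_l; lra).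
  lra.
Qed.

End Shrink.

Lemma convexity_bound_of_rational_modulus (eta' : Q -> nat -> nat) (r eps : R) :
  rational_convexity_modulus d W eta' -> 0 < r -> 0 < eps <= 2 ->
  exists e, 0 < e <= 1 /\
    forall a x y : X, d x a <= r -> d y a <= r -> d x y >= eps * r ->
      d (midW W x y) a <= (1 - e) * r.
Proof.
  intros Heta' Hr Heps.
  destruct (exists_Q2R_between (r * (1 - eps/8)) r) as [q [Hq_lo Hq_hi]]; [nra|].
  assert (Hq : 0 < Q2R q) by nra.
  destruct (half_pow_lt (eps/4)) as [k Hk]; [lra|].
  pose proof (half_pow_pos_le1 (eta' q k)) as Ht.
  set (t := (1/2)^(eta' q k)) in *.
  set (s := Rmin (t * Q2R q / 2) (eps * r / 8)).
  assert (Hs_t : s <= t * Q2R q / 2) by apply Rmin_l.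
  assert (Hs_eps : s <= eps * r / 8) by apply Rmin_r.
  assert (Hs : 0 < s) by (apply Rmin_glb_lt; nra).
  exists (s / r).
  assert (Hsr : (1 - s / r) * r = r - s) by (field; lra).
  split.
  { split; [apply Rdiv_lt_0_compat; lra|].
    apply Rmult_le_reg_r with r; [lra|].
    replace (s / r * r) with s by (field; lra). nra. }
  intros a x y Hx Hy Hxy.
  rewrite Hsr. apply Rnot_lt_le. intros Hfar.
  set (l := (Q2R q - s) / r).
  assert (Hlr : (1 - l) * r = r - Q2R q + s) by (unfold l; field; lra).
  assert (Hl : 0 <= l <= 1).
  { split; apply Rmult_le_reg_r with r; try lra;
      replace (l * r) with (Q2R q - s) by (unfold l; field; lra); nra. }
  pose proof (dist_W_center_le a x l r Hl Hx) as Hx'.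
  pose proof (dist_W_center_le a y l r Hl Hy) as Hy'.
  pose proof (dist_midW_shrink a x y l r Hl Hx Hy) as Hmid'.
  pose proof (dist_shrink a x y l r Hl Hx Hy) as Hxy'.
  assert (l * r = Q2R q - s) by lra.
  assert (Hclose : d (W a x l) (W a y l) <= (1/2)^k * Q2R q).
  { apply (Heta' q k a); [now apply Q2R_pos_iff | lra | lra |].
    fold t. nra. }
  assert ((1/2)^k * Q2R q <= eps / 4 * r).
  { apply Rle_trans with (eps / 4 * Q2R q);
      [apply Rmult_le_compat_r; lra | apply Rmult_le_compat_l; lra]. }
  nra.
Qed.

Lemma modulus_of_rational_modulus (eta' : Q -> nat -> nat) :
  rational_convexity_modulus d W eta' ->
  exists eta : R -> R -> R, uniform_convexity_modulus d W eta.
Proof.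
  intros Heta'.
  assert (He : forall r eps, exists e, 0 < r -> 0 < eps <= 2 -> 0 < e <= 1 /\
            forall a x y : X, d x a <= r -> d y a <= r -> d x y >= eps * r ->
              d (midW W x y) a <= (1 - e) * r).
  { intros r eps.
    destruct (classic (0 < r /\ 0 < eps <= 2)) as [[Hr Heps]|Hout].
    - destruct (convexity_bound_of_rational_modulus eta' r eps Heta' Hr Heps) as [e He].
      exists e. now intros _ _.
    - exists 1. intros Hr Heps. exfalso. tauto. }
  destruct (choice _ (fun r => choice _ (He r))) as [eta Heta].
  exists eta. split.
  - intros r eps Hr Heps. apply (Heta r eps Hr Heps).
  - intros r eps a x y Hr Heps. apply (Heta r eps Hr Heps).
Qed.

End W_hyperbolic.

Theorem proposition3p8 (X : Type) (d : X -> X -> R) (W : X -> X -> R -> X)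
  (HW : is_W_hyperbolic d W) :
  (exists eta : R -> R -> R,
     (forall r eps, 0 < r -> 0 < eps <= 2 -> 0 < eta r eps <= 1) /\
     (forall r eps (a x y : X), 0 < r -> 0 < eps <= 2 ->
        d x a <= r -> d y a <= r -> d x y >= eps * r ->
        d (midW W x y) a <= (1 - eta r eps) * r))
  <->
  (exists eta : Q -> nat -> nat,
     forall (r : Q) (k : nat) (a x y : X), (0 < r)%Q ->
        d x a < Q2R r -> d y a < Q2R r ->
        d (midW W x y) a > (1 - (1/2) ^ (eta r k)) * Q2R r ->
        d x y <= (1/2) ^ k * Q2R r).
Proof.
  split.
  - intros [eta Heta]. exact (rational_modulus_of_modulus d W eta Heta).
  - intros [eta Heta]. exact (modulus_of_rational_modulus X d W HW eta Heta).
Qed.
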